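(* Let $\mathcal{F}$ satisfy the standard conditions and be closed under the minimizer operation. Let $\alpha_0\neq0,\alpha_1,\dots,\alpha_k\in\mathbb{R}_{\mathcal{F}}$. Then every real root of $P(X)=\alpha_0X^k+\alpha_1X^{k-1}+\cdots+\alpha_{k-1}X+\alpha_k$ belongs to $\mathbb{R}_{\mathcal{F}}$.
   Context: $\mathbb{N}=\{0,1,2,\dots\}$. $\mathcal{F}$ is a set of functions $\mathbb{N}^n\to\mathbb{N}$; it satisfies the standard conditions if it contains the zero function, the successor, all projections $P^n_i$, addition, multiplication and modified subtraction $x\dot- y=\max(x-y,0)$, and is closed under composition. For $f:\mathbb{N}^{k+1}\to\mathbb{N}$ the minimizer $\mu f:\mathbb{N}^{k+1}\to\mathbb{N}$ is $\mu f(x_1,\dots,x_k,x_{k+1})=\min\{j: f(x_1,\dots,x_k,j)=0\ \text{or}\ j=x_{k+1}\}$; $\mathcal{F}$ is closed under the minimizer operation if $f\in\mathcal{F}\Rightarrow\mu f\in\mathcal{F}$. An $\mathcal{F}$-sequence is $A:\mathbb{N}\to\mathbb{Q}$, $A(x)=\frac{f(x)-g(x)}{h(x)+1}$ with $f,g,h\in\mathcal{F}$. $\alpha\in\mathbb{R}$ is $\mathcal{F}$-computable if some $\mathcal{F}$-sequence $A$ satisfies $|A(x)-\alpha|\le\frac1{x+1}$ for all $x$; $\mathbb{R}_{\mathcal{F}}$ is the set of $\mathcal{F}$-computable reals. *)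

From mathcomp Require Import all_boot.
From Stdlib Require Import Reals.

Set Implicit Arguments.
Unset Strict Implicit.
Unset Printing Implicit Defensive.

Definition nfun (n : nat) := ('I_n -> nat) -> nat.

Definition FunClass := forall n : nat, nfun n -> Prop.

Definition arg0 : 'I_2 := @Ordinal 2 0 isT.
Definition arg1 : 'I_2 := @Ordinal 2 1 isT.

Definition zero_fun : nfun 1 := fun _ => 0.
Definition succ_fun : nfun 1 := fun x => (x ord0).+1.
Definition proj_fun (n : nat) (i : 'I_n) : nfun n := fun x => x i.
Definition add_fun : nfun 2 := fun x => x arg0 + x arg1.
Definition mul_fun : nfun 2 := fun x => x arg0 * x arg1.
(* modified subtraction x -. y = max(x - y, 0) = truncated subtraction on nat *)
Definition msub_fun : nfun 2 := fun x => x arg0 - x arg1.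

Definition compose (m n : nat) (f : nfun m) (g : 'I_m -> nfun n) : nfun n :=
  fun x => f (fun i => g i x).

Definition standard_conditions (F : FunClass) : Prop :=
  F 1 zero_fun /\ F 1 succ_fun /\
      (forall n (i : 'I_n), F n (proj_fun i)) /\
      F 2 add_fun /\ F 2 mul_fun /\ F 2 msub_fun /\
      (forall m n (f : nfun m) (g : 'I_m -> nfun n),
          F m f -> (forall i, F n (g i)) -> F n (compose f g)).

Definition upd_last (k : nat) (x : 'I_k.+1 -> nat) (j : nat) : 'I_k.+1 -> nat :=
  fun i => if i == ord_max then j else x i.

(* mu f (x_1..x_k, x_{k+1}) = min { j : f(x_1..x_k, j) = 0 or j = x_{k+1} }.
   The least such j lies in [0, x_{k+1}], so it is the first index in
   iota 0 (x_{k+1}+1) satisfying the condition. *)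
Definition minimizer (k : nat) (f : nfun k.+1) : nfun k.+1 :=
  fun x => find (fun j => (f (upd_last x j) == 0) || (j == x ord_max))
                (iota 0 (x ord_max).+1).

Definition closed_under_minimizer (F : FunClass) : Prop :=
  forall k (f : nfun k.+1), F k.+1 f -> F k.+1 (minimizer f).

Definition app1 (f : nfun 1) (x : nat) : nat := f (fun _ => x).

Definition Fseq (f g h : nfun 1) (x : nat) : R :=
  ((INR (app1 f x) - INR (app1 g x)) / (INR (app1 h x) + 1))%R.

Definition F_computable (F : FunClass) (a : R) : Prop :=
  exists f g h : nfun 1, [/\ F 1 f, F 1 g, F 1 h &
    forall x : nat, (Rabs (Fseq f g h x - a) <= 1 / (INR x + 1))%R].

(* Some derivative [Q = P^(r)] vanishes at the root [x] while [P^(r+1)(x) <> 0], so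
   [Q] or [-Q] crosses zero at [x] with slope at least some [c > 0] on a
   neighbourhood of [x].  Fix a rational [a] with [x - 2/K < a <= x - 1/K], [2/K]
   inside that neighbourhood.  At precision [n], scan the grid
   [a + j / (2K(n+1))], [j <= 6(n+1)], evaluating [Q] (or [-Q]) with coefficients
   approximated to within about [c/(n+1)], and stop at the first grid point where
   the approximate value is nonnegative.  The minimizer performs the scan, and
   F-sequences are closed under the ring operations, so the stopping point is an
   F-sequence; the crossing slope puts it within [1/(n+1)] of [x]. *)

From mathcomp Require Import all_boot zify.
From Stdlib Require Import Reals Lra FunctionalExtensionality IndefiniteDescription.

Set Implicit Arguments.
Unset Strict Implicit.
Unset Printing Implicit Defensive.

Definition bmu (g : nat -> nat) (B : nat) : nat :=
  find (fun j => (g j == 0) || (j == B)) (iota 0 B.+1).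

Lemma bmu_spec g B :
  [/\ bmu g B <= B, (g (bmu g B) == 0) || (bmu g B == B)
    & forall j, j < bmu g B -> g j != 0].
Proof.
set P := fun j => (g j == 0) || (j == B).
have hasP : has P (iota 0 B.+1).
  by apply/hasP; exists B; rewrite ?mem_iota /P ?eqxx ?orbT //; lia.
have lt_bmu : bmu g B < B.+1 by move: hasP; rewrite has_find size_iota.
split; first lia.
- by have := nth_find 0 hasP; rewrite nth_iota.
- move=> j lt_j; have := before_find 0 lt_j.
  by rewrite nth_iota; [rewrite /P add0n => /norP [] | lia].
Qed.

Local Open Scope R_scope.

Lemma INR_succ_gt0 (d : nat) : 0 < INR d + 1.
Proof. have := pos_INR d; lra. Qed.

Lemma Rabs_le_inv a b : Rabs a <= b -> - b <= a <= b.
Proof. by have := Rle_abs a; have := Rle_abs (- a); rewrite Rabs_Ropp; lra. Qed.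

Lemma Rdiv_le_cross a b c d : 0 < b -> 0 < d -> a * d <= c * b -> a / b <= c / d.
Proof.
move=> b_pos d_pos le_ad.
have -> : a / b = a * d * / (b * d) by field; lra.
have -> : c / d = c * b * / (b * d) by field; lra.
by apply: Rmult_le_compat_r => //; apply/Rlt_le/Rinv_0_lt_compat; nra.
Qed.

Definition upcrossing (Q : R -> R) (x c dl : R) := forall t, Rabs (t - x) <= dl ->
  (x <= t -> c * (t - x) <= Q t) /\ (t <= x -> Q t <= c * (t - x)).

(* [deriv_poly alpha k r] is the [r]-th derivative of [P = \sum_i alpha_i X^(k-i)]. *)
Definition deriv_poly (alpha : nat -> R) (k r : nat) (t : R) : R :=
  sum_f_R0 (fun i => alpha i * INR ((k - i) ^_ r) * t ^ (k - i - r)) k.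

Fixpoint pow_quot (x : R) (n : nat) (t : R) : R :=
  match n with O => 0 | S n => t ^ n + x * pow_quot x n t end.

Definition deriv_poly_quot (alpha : nat -> R) (k r : nat) (x t : R) : R :=
  sum_f_R0 (fun i => alpha i * INR ((k - i) ^_ r) * pow_quot x (k - i - r) t) k.

Lemma pow_sub_factor x t n : t ^ n - x ^ n = (t - x) * pow_quot x n t.
Proof.
elim: n => [|n IH] /=; first ring.
have -> : t * t ^ n - x * x ^ n = t ^ n * (t - x) + x * (t ^ n - x ^ n) by ring.
by rewrite IH; ring.
Qed.

Lemma pow_quot_diag x n : pow_quot x n.+1 x = INR n.+1 * x ^ n.
Proof.
elim: n => [|n IH]; first by rewrite /=; ring.
rewrite -[pow_quot x n.+2 x]/(x ^ n.+1 + x * pow_quot x n.+1 x) IH.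
by rewrite (S_INR n.+1) -tech_pow_Rmult; ring.
Qed.

Lemma continuity_pow_quot x n t : continuity_pt (pow_quot x n) t.
Proof.
elim: n => [|n IH]; first exact: continuity_pt_const.
apply: (continuity_pt_plus (fun y => y ^ n) (fun y => x * pow_quot x n y)).
  exact: derivable_continuous_pt (derivable_pt_pow n t).
exact: continuity_pt_scal.
Qed.

Lemma continuity_deriv_poly_quot alpha k r x t :
  continuity_pt (deriv_poly_quot alpha k r x) t.
Proof.
apply: continuity_pt_finite_SF => i _.
exact: (continuity_pt_scal (pow_quot x (k - i - r))) (continuity_pow_quot _ _ _).
Qed.

Lemma deriv_poly_sub_factor alpha k r x t :
  deriv_poly alpha k r t - deriv_poly alpha k r x = (t - x) * deriv_poly_quot alpha k r x t.
Proof.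
rewrite /deriv_poly /deriv_poly_quot -minus_sum scal_sum; apply: sum_eq => i _.
by rewrite -Rmult_minus_distr_l pow_sub_factor; ring.
Qed.

Lemma deriv_poly_quot_diag alpha k r x :
  deriv_poly_quot alpha k r x x = deriv_poly alpha k r.+1 x.
Proof.
apply: sum_eq => i _; rewrite ffactnSr mult_INR.
case E: (k - i - r)%nat => [|e]; first by rewrite /= !Rmult_0_r Rmult_0_l.
by rewrite pow_quot_diag (_ : k - i - r.+1 = e)%nat; [ring | lia].
Qed.

Lemma deriv_poly0 alpha k t :
  deriv_poly alpha k 0 t = sum_f_R0 (fun i => alpha i * t ^ (k - i)) k.
Proof. by apply: sum_eq => i _; rewrite ffactn0 subn0 /=; ring. Qed.

Lemma deriv_poly_top alpha k t : deriv_poly alpha k k t = alpha 0%nat * INR k`!.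
Proof.
case: k => [|k]; first by rewrite /deriv_poly /=; ring.
rewrite /deriv_poly decomp_sum; last lia.
rewrite (sum_eq _ (fun _ => 0)); last by move=> i _; rewrite ffact_small /=; [ring | lia].
by rewrite sum_cte subnn subn0 ffactnn Rmult_0_l /=; ring.
Qed.

Lemma exists_switch (P : nat -> Prop) k :
  P 0%nat -> ~ P k -> exists r, (r < k)%nat /\ P r /\ ~ P r.+1.
Proof.
elim: k => [|k IH] P0 notPk; first by [].
case: (Classical_Prop.classic (P k)) => [Pk | notPk']; first by exists k.
by have [r [lt_rk PrP]] := IH P0 notPk'; exists r; split=> //; lia.
Qed.

Lemma upcrossing_of_factor f g x : (forall t, f t = (t - x) * g t) ->
  continuity_pt g x -> 0 < g x -> exists dl, 0 < dl /\ upcrossing f x (g x / 2) dl.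
Proof.
move=> f_eq g_cont gx_pos.
have [al [al_pos g_near]] := g_cont (g x / 2) ltac:(lra).
exists (al / 2); split=> [|t near_t]; first lra.
have g_lb : g x / 2 <= g t.
  case: (Req_dec t x) => [-> | neq_tx]; first lra.
  have /Rabs_def2 : R_dist (g t) (g x) < g x / 2.
    apply: g_near; split; first by split=> //; apply: not_eq_sym.
    by rewrite /= /R_dist; lra.
  lra.
by rewrite f_eq; split=> le_tx; nra.
Qed.

Lemma root_upcrossing alpha k x : alpha 0%nat <> 0 ->
  sum_f_R0 (fun i => alpha i * x ^ (k - i)) k = 0 ->
  exists r c dl, 0 < c /\ 0 < dl /\
    (upcrossing (deriv_poly alpha k r) x c dl \/
     upcrossing (fun t => - deriv_poly alpha k r t) x c dl).
Proof.
move=> alpha0 root_x.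
have top_neq0 : deriv_poly alpha k k x <> 0.
  rewrite deriv_poly_top; apply: Rmult_integral_contrapositive; split=> //.
  by apply: not_0_INR; have := fact_gt0 k; lia.
have [r [_ [root_r simple_r]]] :=
  exists_switch (P := fun r => deriv_poly alpha k r x = 0)
    (etrans (deriv_poly0 alpha k x) root_x) top_neq0.
set g := deriv_poly_quot alpha k r x.
have f_eq t : deriv_poly alpha k r t = (t - x) * g t.
  by have := deriv_poly_sub_factor alpha k r x t; rewrite root_r Rminus_0_r.
have g_cont := continuity_deriv_poly_quot alpha k r x x.
have /Rdichotomy [gx_neg | gx_pos] : g x <> 0 by rewrite /g deriv_poly_quot_diag.
- have [|||dl [dl_pos up]] := @upcrossing_of_factor
    (fun t => - deriv_poly alpha k r t) (fun t => - g t) x.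
  + by move=> t; rewrite f_eq; ring.
  + exact: continuity_pt_opp.
  + lra.
  by exists r, (- g x / 2), dl; split; [lra | split; [|right]].
- have [dl [dl_pos up]] := upcrossing_of_factor f_eq g_cont gx_pos.
  by exists r, (g x / 2), dl; split; [lra | split; [|left]].
Qed.

(* The scan stops at the first grid point where the approximate value of [Q]
   is nonnegative; the previous point still had [Q < eta], and the stopping
   point has [Q >= -eta], which by the upcrossing pins both near [x]. *)
Lemma grid_search_error (Q : R -> R) (Qv : nat -> R) (g : nat -> nat) N x a h c dl eta :
  0 < c -> 0 < h -> a < x < a + INR N * h -> upcrossing Q x c dl ->
  (forall j, (j <= N)%nat -> Rabs (a + INR j * h - x) <= dl) ->
  (forall j, (j <= N)%nat -> Rabs (Qv j - Q (a + INR j * h)) <= eta) ->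
  (forall j, g j = 0%nat <-> 0 <= Qv j) ->
  Rabs (a + INR (bmu g N) * h - x) <= eta / c + h.
Proof.
move=> c_pos h_pos [a_x x_aN] up near close g_spec.
have [le_N stop before] := bmu_spec g N.
have eta_c : eta = eta / c * c by field; lra.
have eta_ge0 : 0 <= eta.
  by apply: Rle_trans (close 0%nat (leq0n N)); exact: Rabs_pos.
have eta_c_ge0 : 0 <= eta / c by apply: Rmult_le_pos => //; apply/Rlt_le/Rinv_0_lt_compat.
set j := bmu g N in le_N stop before *.
have lower : - (eta / c) <= a + INR j * h - x.
  case/orP: stop => [/eqP /g_spec Qv_ge0 | /eqP ->]; last lra.
  have [_ Q_le] := up _ (near j le_N).
  have := Rabs_le_inv (close j le_N).
  case: (Rle_lt_dec x (a + INR j * h)) => [|/Rlt_le t_x]; first lra.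
  by have := Q_le t_x; nra.
have upper : a + INR j * h - x <= eta / c + h.
  case: (posnP j) => [-> | j_pos]; first by rewrite /=; lra.
  have j_eq : j = j.-1.+1 by rewrite prednK.
  set j' := j.-1 in j_eq; rewrite j_eq.
  have le_j'N : (j' <= N)%nat by lia.
  have Qv_neg : Qv j' < 0.
    case: (Rlt_le_dec (Qv j') 0) => // /g_spec /eqP.
    by rewrite (negbTE (before j' _)) // j_eq.
  have [Q_ge _] := up _ (near j' le_j'N).
  have := Rabs_le_inv (close j' le_j'N).
  rewrite S_INR; case: (Rle_lt_dec (a + INR j' * h) x) => [|/Rlt_le x_t]; first lra.
  by have := Q_ge x_t; nra.
by apply: Rabs_le; lra.
Qed.

Definition grid_step (K n : nat) : R := 1 / (2 * INR K.+1 * (INR n + 1)).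

Lemma grid_step_pos K n : 0 < grid_step K n.
Proof.
by apply: Rdiv_lt_0_compat; rewrite ?S_INR; have := pos_INR K; have := pos_INR n; nra.
Qed.

Lemma grid_end K n : INR (6 * (n + 1)) * grid_step K n = 3 / INR K.+1.
Proof.
rewrite /grid_step mult_INR plus_INR !S_INR /=.
by field; have := pos_INR K; have := pos_INR n; lra.
Qed.

Lemma exists_nat_diff_floor y :
  exists p m : nat, INR p - INR m <= y < INR p - INR m + 1.
Proof.
set z := (up y - 1)%Z.
have [fl_le lt_fl] : IZR z <= y < IZR z + 1.
  by rewrite /z minus_IZR; have := archimed y; lra.
case: (Z.le_gt_cases 0 z) => [z_ge0 | z_lt0].
  have [p E] := IZN z z_ge0; exists p, 0%nat.
  by rewrite /= Rminus_0_r INR_IZR_INZ -E.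
have [m E] := IZN (- z) ltac:(lia); exists 0%nat, m.
by rewrite /= Rminus_0_l INR_IZR_INZ -E opp_IZR Ropp_involutive.
Qed.

Lemma exists_grid_start x K : exists p m : nat,
  let a := (INR p - INR m) / INR K.+1 in x - 2 / INR K.+1 < a <= x - 1 / INR K.+1.
Proof.
have K_pos : 0 < INR K.+1 := lt_0_INR _ (Nat.lt_0_succ K).
have [p [m [fl_le lt_fl]]] := exists_nat_diff_floor (x * INR K.+1 - 1).
exists p, m => /=.
have -> : x - 2 / INR K.+1 = (x * INR K.+1 - 1 - 1) / INR K.+1 by field; lra.
have -> : x - 1 / INR K.+1 = (x * INR K.+1 - 1) / INR K.+1 by field; lra.
have K_inv_pos := Rinv_0_lt_compat _ K_pos.
split; first by apply: (Rmult_lt_compat_r _ _ _ K_inv_pos); lra.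
exact: (Rmult_le_compat_r _ _ _ (Rlt_le _ _ K_inv_pos) fl_le).
Qed.

Lemma grid_covers x a K n : x - 2 / INR K.+1 < a <= x - 1 / INR K.+1 ->
  a < x < a + INR (6 * (n + 1)) * grid_step K n /\
  forall j, (j <= 6 * (n + 1))%nat ->
    Rabs (a + INR j * grid_step K n - x) <= 2 / INR K.+1.
Proof.
move=> [a_lo a_hi].
have K_pos : 0 < INR K.+1 := lt_0_INR _ (Nat.lt_0_succ K).
have thirds : 3 / INR K.+1 = 1 / INR K.+1 + 2 / INR K.+1 by field; lra.
have inv_pos : 0 < 1 / INR K.+1 by apply: Rdiv_lt_0_compat; lra.
rewrite grid_end; split; first lra.
move=> j /leP /le_INR le_j.
have step_pos := grid_step_pos K n.
have : INR j * grid_step K n <= 3 / INR K.+1.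
  by rewrite -(grid_end K n); apply: Rmult_le_compat_r; lra.
have := Rmult_le_pos _ _ (pos_INR j) (Rlt_le _ _ step_pos).
by move=> *; apply: Rabs_le; lra.
Qed.

Lemma exists_grid_scale dl : 0 < dl -> exists K : nat, 2 / INR K.+1 <= dl.
Proof.
move=> dl_pos; have [K K_big] := INR_archimed dl 2 dl_pos; exists K.
rewrite -[dl]Rdiv_1_r; apply: Rdiv_le_cross; try lra.
  exact: lt_0_INR _ (Nat.lt_0_succ K).
by rewrite S_INR; have := pos_INR K; nra.
Qed.

Lemma grid_accuracy (K n Mc : nat) c : 0 < c -> INR Mc * c > 2 ->
  1 / (INR (Mc * (n + 1)) + 1) / c + grid_step K n <= 1 / (INR n + 1).
Proof.
move=> c_pos Mc_big; have n_pos := INR_succ_gt0 n.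
have prec_pos := INR_succ_gt0 (Mc * (n + 1)).
have first_half : 1 / (INR (Mc * (n + 1)) + 1) / c <= 1 / (2 * (INR n + 1)).
  rewrite (_ : 1 / _ / c = 1 / ((INR (Mc * (n + 1)) + 1) * c)); last by field; lra.
  apply: Rdiv_le_cross; try nra.
  by rewrite mult_INR plus_INR INR_1; have := pos_INR Mc; nra.
have second_half : grid_step K n <= 1 / (2 * (INR n + 1)).
  have K_ge1 : 1 <= INR K.+1 by rewrite S_INR; have := pos_INR K; lra.
  by apply: Rdiv_le_cross; nra.
have -> : 1 / (INR n + 1) = 1 / (2 * (INR n + 1)) + 1 / (2 * (INR n + 1)) by field; lra.
lra.
Qed.

Lemma sum_coeff_error (alpha beta : nat -> R) (w e : nat -> nat) k T B eps :
  Rabs T <= B -> (forall i, (i <= k)%nat -> Rabs (beta i - alpha i) <= eps) ->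
  Rabs (sum_f_R0 (fun i => beta i * INR (w i) * T ^ e i) k -
        sum_f_R0 (fun i => alpha i * INR (w i) * T ^ e i) k)
  <= eps * sum_f_R0 (fun i => INR (w i) * B ^ e i) k.
Proof.
move=> T_B close; rewrite -minus_sum scal_sum.
apply: Rle_trans (sum_f_R0_triangle _ _) _; apply: sum_Rle => i /leP le_ik.
rewrite (_ : _ - _ = (beta i - alpha i) * (INR (w i) * T ^ e i)); last ring.
rewrite Rabs_mult Rabs_mult (Rabs_pos_eq (INR _) (pos_INR _)) -RPow_abs Rmult_comm.
have pow_T_B : Rabs T ^ e i <= B ^ e i by apply: pow_incr; split=> //; exact: Rabs_pos.
apply: Rmult_le_compat; [| exact: Rabs_pos | | exact: close].
- by apply: Rmult_le_pos; [exact: pos_INR | apply: pow_le; exact: Rabs_pos].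
- exact: Rmult_le_compat_l (pos_INR _) pow_T_B.
Qed.

Definition F1 (F : FunClass) (u : nat -> nat) := F 1%nat (fun v => u (v ord0)).
Definition F2 (F : FunClass) (f : nat -> nat -> nat) :=
  F 2%nat (fun v => f (v arg0) (v arg1)).

Section ComputableReals.

Unset Implicit Arguments.
Variable F : FunClass.
Hypothesis HF : standard_conditions F.
Hypothesis HM : closed_under_minimizer F.
Set Implicit Arguments.

Lemma F_compose m n (f : nfun m) (g : 'I_m -> nfun n) :
  F m f -> (forall i, F n (g i)) -> F n (compose f g).
Proof. by have [_ [_ [_ [_ [_ [_ Hcomp]]]]]] := HF; apply: Hcomp. Qed.

Lemma F_proj n (i : 'I_n) : F n (fun v => v i).
Proof. by have [_ [_ [Hproj _]]] := HF; apply: Hproj. Qed.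

Lemma F_app1 n u (f : nfun n) : F1 F u -> F n f -> F n (fun v => u (f v)).
Proof. by move=> Fu Ff; apply: (@F_compose 1 n (fun v => u (v ord0)) (fun _ => f)). Qed.

Lemma F_app2 n op (f g : nfun n) :
  F2 F op -> F n f -> F n g -> F n (fun v => op (f v) (g v)).
Proof.
move=> Fop Ff Fg.
apply: (@F_compose 2 n (fun v => op (v arg0) (v arg1))
                      (fun i => if val i == 0%nat then f else g)) => // i.
by case: ifP.
Qed.

Lemma F1_const (c : nat) : F1 F (fun _ => c).
Proof.
have [Fzero [Fsucc _]] := HF.
by elim: c => [|c IH] //; apply: (F_app1 (u := succn)).
Qed.

Lemma F_const n (c : nat) : F n.+1 (fun _ => c).
Proof. exact: F_app1 (F1_const c) (F_proj ord0). Qed.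

Lemma F2_addn : F2 F addn. Proof. by have [_ [_ [_ [Fadd _]]]] := HF. Qed.
Lemma F2_muln : F2 F muln. Proof. by have [_ [_ [_ [_ [Fmul _]]]]] := HF. Qed.
Lemma F2_subn : F2 F subn. Proof. by have [_ [_ [_ [_ [_ [Fsub _]]]]]] := HF. Qed.

Lemma F1_id : F1 F (fun n => n). Proof. exact: F_proj. Qed.
Lemma F2_fst : F2 F (fun n _ => n). Proof. exact: F_proj. Qed.
Lemma F2_snd : F2 F (fun _ j => j). Proof. exact: F_proj. Qed.
Lemma F2_const (c : nat) : F2 F (fun _ _ => c). Proof. exact: F_const. Qed.

Lemma F2_add f g : F2 F f -> F2 F g -> F2 F (fun n j => f n j + g n j)%nat.
Proof. exact: F_app2 F2_addn. Qed.
Lemma F2_mul f g : F2 F f -> F2 F g -> F2 F (fun n j => f n j * g n j)%nat.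
Proof. exact: F_app2 F2_muln. Qed.
Lemma F2_sub f g : F2 F f -> F2 F g -> F2 F (fun n j => f n j - g n j)%nat.
Proof. exact: F_app2 F2_subn. Qed.

Lemma F2_comp1 u f : F1 F u -> F2 F f -> F2 F (fun n j => u (f n j)).
Proof. exact: F_app1. Qed.

Lemma F1_comp2 op f g : F2 F op -> F1 F f -> F1 F g -> F1 F (fun n => op (f n) (g n)).
Proof. exact: F_app2. Qed.

Lemma F2_bmu f : F2 F f -> F2 F (fun n => bmu (f n)).
Proof.
move=> Ff; have := HM 1%nat _ Ff.
suff -> : minimizer (fun v : 'I_2 -> nat => f (v arg0) (v arg1)) =
          (fun v => bmu (f (v arg0)) (v arg1)) by [].
apply: functional_extensionality => v.
rewrite /minimizer /bmu /upd_last.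
by have -> : (ord_max : 'I_2) = arg1 by apply/val_inj.
Qed.

Definition Fseq1 (s : nat -> R) := exists f g h, [/\ F1 F f, F1 F g, F1 F h &
  forall n, s n = (INR (f n) - INR (g n)) / (INR (h n) + 1)].

Definition Fseq2 (r : nat -> nat -> R) := exists p m d, [/\ F2 F p, F2 F m, F2 F d &
  forall n j, r n j = (INR (p n j) - INR (m n j)) / (INR (d n j) + 1)].

Lemma Fseq1_of_computable f g h :
  F 1%nat f -> F 1%nat g -> F 1%nat h -> Fseq1 (Fseq f g h).
Proof.
have F1_app1 u : F 1%nat u -> F1 F (app1 u).
  rewrite /F1; suff -> : (fun v : 'I_1 -> nat => app1 u (v ord0)) = u by [].
  apply: functional_extensionality => v; congr u.
  by apply: functional_extensionality => i; rewrite (ord1 i).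
by move=> Ff Fg Fh; exists (app1 f), (app1 g), (app1 h); split; try apply: F1_app1.
Qed.

Lemma computable_of_Fseq1 s x :
  Fseq1 s -> (forall n, Rabs (s n - x) <= 1 / (INR n + 1)) -> F_computable F x.
Proof.
case=> f [g [h [Ff Fg Fh E]]] close.
exists (fun v => f (v ord0)), (fun v => g (v ord0)), (fun v => h (v ord0)).
by split=> // n; rewrite /Fseq /app1 -E.
Qed.

Lemma Fseq2_ext r r' : Fseq2 r -> (forall n j, r n j = r' n j) -> Fseq2 r'.
Proof.
by case=> p [m [d [Fp Fm Fd E]]] E'; exists p, m, d; split=> // n j; rewrite -E'.
Qed.

Lemma Fseq2_const (p m d : nat) :
  Fseq2 (fun _ _ => (INR p - INR m) / (INR d + 1)).
Proof.
by exists (fun _ _ => p), (fun _ _ => m), (fun _ _ => d); split; try apply: F2_const.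
Qed.

Lemma Fseq2_frac f d : F2 F f -> F2 F d ->
  Fseq2 (fun n j => INR (f n j) / (INR (d n j) + 1)).
Proof.
move=> Ff Fd; exists f, (fun _ _ => 0%nat), d; split=> //; first exact: F2_const.
by move=> n j; rewrite /= Rminus_0_r.
Qed.

Lemma Fseq2_opp r : Fseq2 r -> Fseq2 (fun n j => - r n j).
Proof.
case=> p [m [d [Fp Fm Fd E]]]; exists m, p, d; split=> // n j.
by rewrite E; field; apply: Rgt_not_eq; exact: INR_succ_gt0.
Qed.

Lemma Fseq2_add r1 r2 : Fseq2 r1 -> Fseq2 r2 -> Fseq2 (fun n j => r1 n j + r2 n j).
Proof.
move=> [p1 [m1 [d1 [Fp1 Fm1 Fd1 E1]]]] [p2 [m2 [d2 [Fp2 Fm2 Fd2 E2]]]].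
exists (fun n j => p1 n j * (d2 n j + 1) + p2 n j * (d1 n j + 1))%nat,
       (fun n j => m1 n j * (d2 n j + 1) + m2 n j * (d1 n j + 1))%nat,
       (fun n j => d1 n j * d2 n j + d1 n j + d2 n j)%nat.
split; try by repeat (apply: F2_add || apply: F2_mul || apply: F2_const).
move=> n j; rewrite E1 E2 !plus_INR !mult_INR !plus_INR /=.
have := INR_succ_gt0 (d1 n j); have := INR_succ_gt0 (d2 n j).
have := pos_INR (d1 n j); have := pos_INR (d2 n j).
by move=> *; field; split; nra.
Qed.

Lemma Fseq2_mul r1 r2 : Fseq2 r1 -> Fseq2 r2 -> Fseq2 (fun n j => r1 n j * r2 n j).
Proof.
move=> [p1 [m1 [d1 [Fp1 Fm1 Fd1 E1]]]] [p2 [m2 [d2 [Fp2 Fm2 Fd2 E2]]]].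
exists (fun n j => p1 n j * p2 n j + m1 n j * m2 n j)%nat,
       (fun n j => p1 n j * m2 n j + m1 n j * p2 n j)%nat,
       (fun n j => d1 n j * d2 n j + d1 n j + d2 n j)%nat.
split; try by repeat (apply: F2_add || apply: F2_mul || apply: F2_const).
move=> n j; rewrite E1 E2 !plus_INR !mult_INR.
have := INR_succ_gt0 (d1 n j); have := INR_succ_gt0 (d2 n j).
have := pos_INR (d1 n j); have := pos_INR (d2 n j).
by move=> *; field; split; nra.
Qed.

Lemma Fseq2_pow r e : Fseq2 r -> Fseq2 (fun n j => r n j ^ e).
Proof.
move=> Fr; elim: e => [|e IH].
  by apply: Fseq2_ext (Fseq2_const 1 0 0) _ => n j /=; field.
exact: Fseq2_ext (Fseq2_mul Fr IH) _.
Qed.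

Lemma Fseq2_sum (r : nat -> nat -> nat -> R) K :
  (forall i, (i <= K)%nat -> Fseq2 (r i)) ->
  Fseq2 (fun n j => sum_f_R0 (fun i => r i n j) K).
Proof.
elim: K => [|K IH] Fr; first exact: Fr.
apply: Fseq2_ext (Fseq2_add (IH _) (Fr K.+1 _)) _ => // i le_iK.
by apply: Fr; lia.
Qed.

Lemma Fseq2_comp s g : Fseq1 s -> F2 F g -> Fseq2 (fun n j => s (g n j)).
Proof.
case=> f1 [f2 [f3 [F1f1 F1f2 F1f3 E]]] Fg.
exists (fun n j => f1 (g n j)), (fun n j => f2 (g n j)), (fun n j => f3 (g n j)).
by split; try apply: F2_comp1.
Qed.

Lemma Fseq1_diag r js : Fseq2 r -> F1 F js -> Fseq1 (fun n => r n (js n)).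
Proof.
case=> p [m [d [Fp Fm Fd E]]] Fjs.
exists (fun n => p n (js n)), (fun n => m n (js n)), (fun n => d n (js n)).
by split=> [|||n]; rewrite ?E //; apply: F1_comp2 F1_id Fjs.
Qed.

Lemma Fseq2_nonneg_test r : Fseq2 r ->
  exists g, F2 F g /\ forall n j, g n j = 0%nat <-> 0 <= r n j.
Proof.
case=> p [m [d [Fp Fm Fd E]]].
exists (fun n j => m n j - p n j)%nat; split; first exact: F2_sub.
move=> n j; rewrite E; have d_pos := INR_succ_gt0 (d n j).
split=> [/eqP | ge0].
- rewrite subn_eq0 => /leP /le_INR le_mp.
  by apply: Rmult_le_pos; [lra | apply/Rlt_le/Rinv_0_lt_compat].
- apply/eqP; rewrite subn_eq0; apply/leP/INR_le.
  have := Rmult_le_compat_r _ _ _ (Rlt_le _ _ d_pos) ge0.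
  by rewrite Rmult_0_l /Rdiv Rmult_assoc Rinv_l; lra.
Qed.

Lemma exists_Fseq1_approximants (alpha : nat -> R) k :
  (forall i, (i <= k)%nat -> F_computable F (alpha i)) ->
  exists s : nat -> nat -> R, forall i, (i <= k)%nat ->
    Fseq1 (s i) /\ forall n, Rabs (s i n - alpha i) <= 1 / (INR n + 1).
Proof.
move=> alpha_comp.
apply: (functional_choice (fun i (s : nat -> R) => (i <= k)%nat ->
  Fseq1 s /\ forall n, Rabs (s n - alpha i) <= 1 / (INR n + 1))) => i.
case: (leqP i k) => [le_ik | lt_ki]; last by exists (fun _ => 0) => ?; lia.
have [f [g [h [Ff Fg Fh close]]]] := alpha_comp i le_ik.
by exists (Fseq f g h) => _; split; [exact: Fseq1_of_computable | exact: close].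
Qed.

Definition approximable (Q : R -> R) :=
  forall (t : nat -> nat -> R) (B : R) (M : nat -> nat), Fseq2 t -> F1 F M ->
  exists Qa, Fseq2 Qa /\ forall n j, Rabs (t n j) <= B ->
    Rabs (Qa n j - Q (t n j)) <= 1 / (INR (M n) + 1).

Lemma approximable_opp Q : approximable Q -> approximable (fun t => - Q t).
Proof.
move=> HQ t B M Ft FM; have [Qa [FQa close]] := HQ t B M Ft FM.
exists (fun n j => - Qa n j); split=> [|n j t_B]; first exact: Fseq2_opp.
by rewrite -Rabs_Ropp (_ : - _ = Qa n j - Q (t n j)); [exact: close | ring].
Qed.

Lemma approximable_poly alpha (w e : nat -> nat) k :
  (forall i, (i <= k)%nat -> F_computable F (alpha i)) ->
  approximable (fun t => sum_f_R0 (fun i => alpha i * INR (w i) * t ^ e i) k).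
Proof.
move=> /exists_Fseq1_approximants [s s_spec] t B M Ft FM.
set C := sum_f_R0 (fun i => INR (w i) * Rabs B ^ e i) k.
have C_ge0 : 0 <= C.
  apply: cond_pos_sum => i; apply: Rmult_le_pos; first exact: pos_INR.
  by apply: pow_le; exact: Rabs_pos.
have [c C_c] : exists c : nat, C <= INR c.
  by have [c] := INR_archimed 1 C Rlt_0_1; exists c; lra.
pose prec n := (c * (M n + 1))%nat.
have Fprec : F2 F (fun n _ => prec n).
  apply: F2_comp1 F2_fst; rewrite /prec.
  apply: F1_comp2 F2_muln (F1_const c) _.
  exact: F1_comp2 F2_addn FM (F1_const 1).
exists (fun n j => sum_f_R0 (fun i => s i (prec n) * INR (w i) * t n j ^ e i) k).
split=> [|n j t_B].
  apply: Fseq2_sum => // i le_ik; apply: Fseq2_mul => //; last exact: Fseq2_pow.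
  apply: Fseq2_mul => //; first exact: Fseq2_comp (proj1 (s_spec i le_ik)) Fprec.
  by apply: Fseq2_ext (Fseq2_const (w i) 0 0) _ => n' j' /=; field.
have t_absB : Rabs (t n j) <= Rabs B := Rle_trans _ _ _ t_B (Rle_abs B).
have coeff_close i (le_ik : (i <= k)%nat) := proj2 (s_spec i le_ik) (prec n).
apply: Rle_trans (sum_coeff_error w e t_absB coeff_close) _.
rewrite -/C (_ : 1 / _ * C = C / (INR (prec n) + 1)); last first.
  by field; apply: Rgt_not_eq; exact: INR_succ_gt0.
apply: Rdiv_le_cross; try exact: INR_succ_gt0.
rewrite /prec mult_INR plus_INR /=; have := pos_INR (M n); nra.
Qed.

Lemma Fseq2_grid p m K :
  Fseq2 (fun n j => (INR p - INR m) / INR K.+1 + INR j * grid_step K n).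
Proof.
apply: Fseq2_ext (Fseq2_add (Fseq2_const p m K)
  (Fseq2_frac (f := fun _ j => j) (d := fun n _ => 2 * K.+1 * n + (2 * K + 1))%nat
    F2_snd _)) _.
  by repeat (apply: F2_add || apply: F2_mul || apply: F2_const || apply: F2_fst).
move=> n j; rewrite /grid_step -S_INR; congr (_ + _).
rewrite -S_INR (_ : (2 * K.+1 * n + (2 * K + 1)).+1 = 2 * K.+1 * n.+1)%nat; last lia.
rewrite !mult_INR !S_INR INR_0.
by field; have := pos_INR n; have := pos_INR K; lra.
Qed.

Lemma computable_of_upcrossing Q x c dl :
  approximable Q -> 0 < c -> 0 < dl -> upcrossing Q x c dl -> F_computable F x.
Proof.
move=> HQ c_pos dl_pos up.
have [K K_dl] := exists_grid_scale dl_pos.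
have [p [m a_bounds]] := exists_grid_start x K.
set a := (INR p - INR m) / INR K.+1 in a_bounds.
pose t n j := a + INR j * grid_step K n.
have [Mc Mc_big] := INR_archimed c 2 c_pos.
pose prec n := (Mc * (n + 1))%nat.
have Fprec : F1 F prec.
  by apply: F1_comp2 F2_muln (F1_const Mc) (F1_comp2 F2_addn F1_id (F1_const 1)).
have [Qa [FQa Qa_close]] := HQ t (Rabs x + dl) prec (Fseq2_grid p m K) Fprec.
have [g [Fg g_spec]] := Fseq2_nonneg_test FQa.
pose js n := bmu (g n) (6 * (n + 1)).
have Fjs : F1 F js.
  apply: F1_comp2 (F2_bmu Fg) F1_id _.
  exact: F1_comp2 F2_muln (F1_const 6) (F1_comp2 F2_addn F1_id (F1_const 1)).
apply: (computable_of_Fseq1 (Fseq1_diag (Fseq2_grid p m K) Fjs)) => n.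
have [a_x_end near] := grid_covers n a_bounds.
have near_dl j (le_j : (j <= 6 * (n + 1))%nat) : Rabs (t n j - x) <= dl.
  exact: Rle_trans (near j le_j) K_dl.
have close j (le_j : (j <= 6 * (n + 1))%nat) :
    Rabs (Qa n j - Q (t n j)) <= 1 / (INR (prec n) + 1).
  apply: Qa_close; have := Rabs_triang x (t n j - x).
  by rewrite (_ : x + _ = t n j); [have := near_dl j le_j; lra | ring].
apply: Rle_trans
  (grid_search_error c_pos (grid_step_pos K n) a_x_end up near_dl close (g_spec n)) _.
exact: (@grid_accuracy K n Mc c c_pos Mc_big).
Qed.

End ComputableReals.

Theorem mainTheorem13 (F : FunClass)
  (HF : standard_conditions F) (HM : closed_under_minimizer F)
  (k : nat) (alpha : nat -> R)
  (H0 : alpha 0%nat <> 0%R)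
  (Hc : forall i : nat, (i <= k)%nat -> F_computable F (alpha i))
  (x : R) (Hroot : sum_f_R0 (fun i => (alpha i * x ^ (k - i))%R) k = 0%R) :
  F_computable F x.
Proof.
have approx r : approximable F (deriv_poly alpha k r) :=
  approximable_poly HF (fun i => (k - i) ^_ r)%nat (fun i => k - i - r)%nat Hc.
have [r [c [dl [c_pos [dl_pos [up | up]]]]]] := root_upcrossing H0 Hroot.
- exact: (computable_of_upcrossing HF HM (approx r) c_pos dl_pos up).
- exact: (computable_of_upcrossing HF HM (approximable_opp (approx r)) c_pos dl_pos up).
Qed.
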